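(* For every $1\le j\le d$, $k\ge1$, $\hat x\neq\hat y\in\mathbb Z^d$ and $\eta\in\Omega$, $$c^{(k),j}_{\hat x,\hat y}(\eta)\,[\eta(\hat y)-\eta(\hat x)]=P^{(k),j}(\tau^{\hat y}\eta)-P^{(k),j}(\tau^{\hat x}\eta)-\nabla_jA^{(k),j}_{\hat x,\hat y}(\eta),$$ where $P^{(k),j}(\eta)=\frac12\prod_{i=0}^{k-1}\eta(i\hat e_j)+\frac12\prod_{i=0}^{k-1}\eta(-i\hat e_j)$, $A^{(k),j}_{\hat x,\hat y}=M^{(k),j}_{\hat x,\hat y}-M^{(k),j}_{\hat y,\hat x}$ and $M^{(k),j}_{\hat x,\hat y}(\eta)=\frac12\sum_{\ell=1}^{k-1}\prod_{i_0=1}^{\ell}\eta(\hat x-i_0\hat e_j)\prod_{i_1=0}^{k-1-\ell}\eta(\hat y+i_1\hat e_j)$.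
   Context: $\Omega=\{0,\dots,N_{\mathrm e}\}^{\mathbb Z^d}$, $\{\hat e_1,\dots,\hat e_d\}$ the canonical basis. $\tau^{\hat z}\eta(\hat w)=\eta(\hat w+\hat z)$, $\tau_j\eta(\hat w)=\eta(\hat w+\hat e_j)$, and for $A:\Omega\to\mathbb R$, $\nabla_jA(\eta)=A(\tau_j\eta)-A(\eta)$. For $k\ge1$: $r^{(k),j}_{\hat x,\hat y}(\eta)=\sum_{\ell=1}^k\prod_{i=1}^{k-\ell}\eta(\hat x-i\hat e_j)\prod_{m=1}^{\ell-1}\eta(\hat y+m\hat e_j)$ (empty products equal $1$), and $c^{(k),j}_{\hat x,\hat y}=\frac12\big(r^{(k),j}_{\hat x,\hat y}+r^{(k),j}_{\hat y,\hat x}\big)$. Empty sums equal $0$. *)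

From HB Require Import structures.
From mathcomp Require Import all_boot all_order all_algebra.
From mathcomp Require Import reals.
Set Implicit Arguments. Unset Strict Implicit. Unset Printing Implicit Defensive.
Import Order.TTheory GRing.Theory Num.Theory.
Local Open Scope ring_scope.

Definition site (d : nat) := 'rV[int]_d.
Definition ehat (d : nat) (j : 'I_d) : site d := delta_mx 0 j.
(* configurations: eta : Z^d -> nat (the range {0..N_e} is a hypothesis) *)
Definition config (d : nat) := site d -> nat.

Section Defs.
Variables (R : realType) (d : nat).

Definition shift (z : site d) (eta : config d) : config d := fun w => eta (w + z).
Definition tau (j : 'I_d) (eta : config d) : config d := shift (ehat j) eta.
Definition nabla (j : 'I_d) (A : config d -> R) (eta : config d) : R :=
  A (tau j eta) - A eta.

Definition rr (k : nat) (j : 'I_d) (x y : site d) (eta : config d) : R :=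
  \sum_(1 <= l < k.+1)
     (\prod_(1 <= i < (k - l).+1) (eta (x - ehat j *+ i))%:R) *
     (\prod_(1 <= m < l) (eta (y + ehat j *+ m))%:R).

Definition cc (k : nat) (j : 'I_d) (x y : site d) (eta : config d) : R :=
  2^-1 * (rr k j x y eta + rr k j y x eta).

Definition PP (k : nat) (j : 'I_d) (eta : config d) : R :=
  2^-1 * \prod_(0 <= i < k) (eta (ehat j *+ i))%:R +
  2^-1 * \prod_(0 <= i < k) (eta (- (ehat j *+ i)))%:R.

Definition MM (k : nat) (j : 'I_d) (x y : site d) (eta : config d) : R :=
  2^-1 * \sum_(1 <= l < k)
     (\prod_(1 <= i0 < l.+1) (eta (x - ehat j *+ i0))%:R) *
     (\prod_(0 <= i1 < k - l) (eta (y + ehat j *+ i1))%:R).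

Definition AA (k : nat) (j : 'I_d) (x y : site d) (eta : config d) : R :=
  MM k j x y eta - MM k j y x eta.

End Defs.

From HB Require Import structures.
From mathcomp Require Import all_boot all_order all_algebra.
From mathcomp Require Import reals ring.
Import Order.TTheory GRing.Theory Num.Theory.
Local Open Scope ring_scope.

(* Write u_i = eta(x - i e_j) and v_i = eta(y + i e_j).  The l-th summand of
   r_{x,y} times (v_0 - u_0) is g(k-l) - h(k-l+1), where g(a) is the product of
   u_1..u_a and v_0..v_{k-1-a} and h(a) that of u_0..u_{a-1} and v_1..v_{k-a};
   the sum telescopes to g(0) - h(k) plus the interior terms g(a) - h(a),
   0 < a < k.  The g(a) add up to 2 M_{x,y}(eta) and, since translating by
   e_j shifts the u's and v's by one, the h(a) add up to 2 M_{x,y}(tau_j eta).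
   Symmetrising in x and y gives the identity. *)

Section Staircase.
Variables (R : comPzRingType) (u v : nat -> R).

Lemma staircase_mul_diff (k : nat) : (0 < k)%N ->
  (\sum_(1 <= l < k.+1)
      (\prod_(1 <= i < (k - l).+1) u i) * (\prod_(1 <= i < l) v i)) * (v 0 - u 0)
  = \prod_(0 <= i < k) v i - \prod_(0 <= i < k) u i
    + \sum_(1 <= a < k) (\prod_(1 <= i < a.+1) u i) * (\prod_(0 <= i < k - a) v i)
    - \sum_(1 <= a < k) (\prod_(0 <= i < a) u i) * (\prod_(1 <= i < (k - a).+1) v i).
Proof.
move=> k_gt0.
set g := fun a => (\prod_(1 <= i < a.+1) u i) * (\prod_(0 <= i < k - a) v i).
set h := fun a => (\prod_(0 <= i < a) u i) * (\prod_(1 <= i < (k - a).+1) v i).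
have summand a : (a < k)%N ->
    (\prod_(1 <= i < a.+1) u i) * (\prod_(1 <= i < k - a) v i) * (v 0 - u 0)
    = g a - h a.+1.
  move=> lt_ak; rewrite /g /h subnSK //.
  case: (k - a)%N (subn_gt0 a k) => [|b _]; first by rewrite lt_ak.
  by rewrite !big_add1 /= !big_nat_recl //; ring.
rewrite big_add1 big_nat_rev /= mulr_suml.
under [LHS]eq_big_nat => i /andP[_ lt_ik].
  rewrite add0n (subnSK lt_ik) (subKn (ltnW lt_ik)) summand //; over.
rewrite sumrB.
have -> : \sum_(0 <= a < k) h a.+1 = \sum_(1 <= a < k) h a + h k.
  by rewrite -big_nat_recr // big_add1.
rewrite [in LHS]big_ltn //.
have -> : g 0%N = \prod_(0 <= i < k) v i by rewrite /g big_geq // mul1r subn0.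
have -> : h k = \prod_(0 <= i < k) u i.
  by rewrite /h subnn [X in _ * X]big_geq // mulr1.
ring.
Qed.

End Staircase.

Section Currents.
Variables (R : realType) (d : nat) (j : 'I_d).

Lemma PP_shift (k : nat) (z : site d) (eta : config d) :
  PP R k j (shift z eta)
  = 2^-1 * \prod_(0 <= i < k) (eta (z + ehat j *+ i))%:R
    + 2^-1 * \prod_(0 <= i < k) (eta (z - ehat j *+ i))%:R.
Proof.
by rewrite /PP /shift; congr (_ * _ + _ * _); apply: eq_bigr => i _; rewrite addrC.
Qed.

Lemma MM_tau (k : nat) (x y : site d) (eta : config d) :
  MM R k j x y (tau j eta)
  = 2^-1 * \sum_(1 <= a < k) (\prod_(0 <= i < a) (eta (x - ehat j *+ i))%:R)
                * (\prod_(1 <= i < (k - a).+1) (eta (y + ehat j *+ i))%:R).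
Proof.
rewrite /MM /tau /shift; congr (_ * _); apply: eq_bigr => a _.
congr (_ * _); rewrite big_add1; apply: eq_bigr => i _.
  by rewrite mulrS opprD addrA addrAC subrK.
by rewrite mulrSr addrA.
Qed.

Lemma rr_mul_diff (k : nat) (x y : site d) (eta : config d) : (0 < k)%N ->
  rr R k j x y eta * ((eta y)%:R - (eta x)%:R)
  = \prod_(0 <= i < k) (eta (y + ehat j *+ i))%:R
    - \prod_(0 <= i < k) (eta (x - ehat j *+ i))%:R
    + 2 * (MM R k j x y eta - MM R k j x y (tau j eta)).
Proof.
move=> k_gt0.
have := @staircase_mul_diff R (fun i => (eta (x - ehat j *+ i))%:R)
  (fun i => (eta (y + ehat j *+ i))%:R) k k_gt0.
rewrite /= mulr0n addr0 subr0 => ->.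
by rewrite MM_tau /MM mulrBr !mulrA divff ?pnatr_eq0 // !mul1r addrA.
Qed.

End Currents.

Theorem mainTheorem3 (R : realType) (d Ne : nat) (j : 'I_d) (k : nat)
  (x y : site d) (eta : config d) :
  (0 < k)%N -> x != y -> (forall z, (eta z <= Ne)%N) ->
  cc R k j x y eta * ((eta y)%:R - (eta x)%:R)
  = PP R k j (shift y eta) - PP R k j (shift x eta)
    - nabla j (AA R k j x y) eta.
Proof.
move=> k_gt0 _ _.
have -> : cc R k j x y eta * ((eta y)%:R - (eta x)%:R)
    = 2^-1 * (rr R k j x y eta * ((eta y)%:R - (eta x)%:R))
    - 2^-1 * (rr R k j y x eta * ((eta x)%:R - (eta y)%:R)).
  by rewrite /cc; ring.
by rewrite !rr_mul_diff // !PP_shift /nabla /AA; field.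
Qed.
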